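(* Let $\mu\in\mathcal P_2(\mathbb R^d)$, $N\ge1$ and let $\Gamma_{2,N}$ be a quadratic optimal $N$-quantizer of $\mu$. Then for any probability measure $\nu$ on $\mathbb R^d$ such that $\hat\mu^{\Gamma_{2,N}}\le_{cvx}\nu\le_{cvx}\mu$, $\Gamma_{2,N}$ is a quadratic optimal $N$-quantizer of $\nu$ and $\hat\nu^{\Gamma_{2,N}}=\hat\mu^{\Gamma_{2,N}}$.
   Context: $\mu\le_{cvx}\nu$ means $\int\varphi\,d\mu\le\int\varphi\,d\nu$ for all convex $\varphi:\mathbb R^d\to\mathbb R$. A quadratic optimal $N$-quantizer of a probability measure $\mu$ with finite second moment is a set $\Gamma\subset\mathbb R^d$ with $|\Gamma|\le N$ minimizing $\int\mathrm{dist}(x,\Gamma)^2\mu(dx)$ over all such sets. For such $\Gamma$, $\hat\mu^\Gamma=\mu\circ\mathrm{Proj}_\Gamma^{-1}$ where $\mathrm{Proj}_\Gamma:\mathbb R^d\to\Gamma$ is any Borel map with $|x-\mathrm{Proj}_\Gamma(x)|=\mathrm{dist}(x,\Gamma)$ (the image does not depend on the choice). *)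

From HB Require Import structures.
From mathcomp Require Import all_boot all_order all_algebra finmap.
From mathcomp Require Import all_classical all_reals all_analysis.
Set Implicit Arguments. Unset Strict Implicit. Unset Printing Implicit Defensive.
Import Order.TTheory GRing.Theory Num.Theory.
Import numFieldNormedType.Exports.
Local Open Scope classical_set_scope.
Local Open Scope ring_scope.

(* R^d is represented by row vectors 'rV[R]_d, with the Borel sigma-algebra
   (generated by the open sets of its standard (product = Euclidean) topology). *)
Definition Rd (R : realType) (d : nat) : Type :=
  g_sigma_algebraType (@open 'rV[R]_d).

HB.instance Definition _ (R : realType) (d : nat) :=
  Measurable.on (Rd R d).

Definition sqdist (R : realType) (d : nat) (x y : 'rV[R]_d) : R :=
  \sum_(i < d) (x ord0 i - y ord0 i) ^+ 2.

Definition sqnorm (R : realType) (d : nat) (x : 'rV[R]_d) : R :=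
  \sum_(i < d) (x ord0 i) ^+ 2.

(* dist(x, Gamma)^2 (= +oo when Gamma is empty) *)
Definition dist2 (R : realType) (d : nat) (G : {fset 'rV[R]_d}) (x : 'rV[R]_d)
  : \bar R :=
  ereal_inf [set (sqdist x a)%:E | a in [set a | a \in G]].

Definition distortion (R : realType) (d : nat) (mu : set (Rd R d) -> \bar R)
  (G : {fset 'rV[R]_d}) : \bar R :=
  (\int[mu]_x dist2 G x)%E.

Definition opt_quantizer (R : realType) (d : nat) (mu : set (Rd R d) -> \bar R)
  (N : nat) (G : {fset 'rV[R]_d}) : Prop :=
  (#|` G| <= N)%N /\
  forall G' : {fset 'rV[R]_d}, (#|` G'| <= N)%N ->
    (distortion mu G <= distortion mu G')%E.

Definition finite_second_moment (R : realType) (d : nat)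
  (mu : set (Rd R d) -> \bar R) : Prop :=
  (\int[mu]_x (sqnorm x)%:E < +oo)%E.

Definition cvx_le (R : realType) (d : nat) (mu nu : set (Rd R d) -> \bar R)
  : Prop :=
  forall phi : 'rV[R]_d -> R, convex_function setT phi ->
    (\int[mu]_x (phi x)%:E <= \int[nu]_x (phi x)%:E)%E.

Definition nearest_proj (R : realType) (d : nat) (G : {fset 'rV[R]_d})
  (p : 'rV[R]_d -> 'rV[R]_d) : Prop :=
  forall x, p x \in G /\ forall a, a \in G -> sqdist x (p x) <= sqdist x a.

From HB Require Import structures.
From mathcomp Require Import all_boot all_order all_algebra finmap.
From mathcomp Require Import all_classical all_reals all_analysis.
From mathcomp Require Import ring lra measurable_realfun.
Set Implicit Arguments. Unset Strict Implicit. Unset Printing Implicit Defensive.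
Import Order.TTheory GRing.Theory Num.Theory.
Import numFieldNormedType.Exports.
Local Open Scope classical_set_scope.
Local Open Scope ring_scope.

(* Write tangent b x = 2<x,b> - |b|^2 for the tangent plane of |.|^2 at b and
   env_G = max_{b in G} tangent b, a convex function with
   dist(x, G)^2 = |x|^2 - env_G(x) and env_G = |.|^2 on G.  Distortions are
   thus second moments minus integrals of envelopes.

   1. Stationarity: if G is optimal for mu, each codeword is the centroid of
      its cell (moving it along a coordinate axis would lower the
      distortion).  Consequently int env_G dmu = int |p|^2 dmu
      = int env_G d(p#mu), where p is the nearest-neighbour projection.
   2. Since env_G is convex and p#mu <=cvx nu <=cvx mu, nu integrates env_G
      like mu.  For any other codebook G', int env_G' dnu <= int env_G' dmu,
      and second moments cancel, so G is optimal for nu.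
   3. Stationarity also shows that the closed Voronoi region of a codeword
      and its cell have the same mu-mass.  Testing the convex order against
      max(env_G, tangent a + e) and letting e -> 0 gives
      nu(cell a) <= nu(voronoi a) <= mu(voronoi a) = mu(cell a); as both
      families of masses sum to one, p#nu = p#mu. *)

Section Euclid.
Variables (R : realType) (d : nat).
Implicit Types x y a b : 'rV[R]_d.

Definition dot x y : R := \sum_(i < d) x ord0 i * y ord0 i.

(* The tangent plane of |.|^2 at b; it is the affine minorant with
   |x - b|^2 = |x|^2 - tangent b x. *)
Definition tangent b x : R := 2 * dot x b - sqnorm b.

Lemma sqdist_tangent x b : sqdist x b = sqnorm x - tangent b x.
Proof.
rewrite /sqdist /sqnorm /tangent /dot mulr_sumr -!sumrB.
by apply: eq_bigr => i _; ring.
Qed.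

Lemma sqnorm_ge0 x : 0 <= sqnorm x.
Proof. by apply: sumr_ge0 => i _; exact: sqr_ge0. Qed.

Lemma sqdist_ge0 x y : 0 <= sqdist x y.
Proof. by apply: sumr_ge0 => i _; exact: sqr_ge0. Qed.

Lemma sqdist_eq0 x y : sqdist x y = 0 -> x = y.
Proof.
move/eqP; rewrite psumr_eq0 => [/allP xy|i _]; last exact: sqr_ge0.
apply/rowP => j; rewrite [ord0]ord1 in xy.
by move: (xy j (mem_index_enum _)); rewrite sqrf_eq0 subr_eq0 => /eqP.
Qed.

Lemma sqdistxx x : sqdist x x = 0.
Proof. by rewrite /sqdist big1 // => i _; rewrite subrr expr0n. Qed.

Lemma coord_le_sqnorm x i : (x ord0 i) ^+ 2 <= sqnorm x.
Proof.
rewrite /sqnorm (bigD1 i) //= lerDl.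
by apply: sumr_ge0 => j _; exact: sqr_ge0.
Qed.

Lemma tangent_affine (t : R) x y b :
  tangent b (t *: x + (1 - t) *: y) = t * tangent b x + (1 - t) * tangent b y.
Proof.
rewrite /tangent /dot !mulr_sumr -!sumrB !mulr_sumr -big_split /=.
by apply: eq_bigr => i _; rewrite !mxE; ring.
Qed.

Lemma tangent_le_sqnorm b x : tangent b x <= sqnorm x.
Proof. by have := sqdist_ge0 x b; rewrite sqdist_tangent subr_ge0. Qed.

Lemma tangent_self b : tangent b b = sqnorm b.
Proof.
by have := sqdistxx b; rewrite sqdist_tangent => /eqP; rewrite subr_eq0 => /eqP.
Qed.

Lemma dot_bound x y : `|dot x y| <= sqnorm x + sqnorm y.
Proof.
rewrite /dot /sqnorm -big_split /=; apply: (le_trans (ler_norm_sum _ _ _)).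
apply: ler_sum => i _; rewrite normrM -(real_normK (num_real (x ord0 i))).
rewrite -(real_normK (num_real (y ord0 i))).
have := normr_ge0 (x ord0 i); have := normr_ge0 (y ord0 i); nra.
Qed.

Lemma tangent_bound b x : `|tangent b x| <= 2 * sqnorm x + 3 * sqnorm b.
Proof.
have := dot_bound x b; have := sqnorm_ge0 b; have := sqnorm_ge0 x.
rewrite /tangent; move: (dot x b) (sqnorm x) (sqnorm b) => u v w v0 w0 uvw.
apply: (le_trans (ler_normB _ _)); rewrite normrM (ger0_norm w0) ger0_norm //.
lra.
Qed.

Lemma dot_diff_sqdist x a b :
  2 * \sum_(i < d) (a ord0 i - b ord0 i) * (x ord0 i - b ord0 i) =
  sqdist x b - sqdist x a + sqdist a b.
Proof.
by rewrite /sqdist mulr_sumr -sumrB -big_split /=; apply: eq_bigr => i _; ring.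
Qed.

Lemma convex_functionP (f : 'rV[R]_d -> R) :
  (forall (t : R) x y, 0 <= t -> t <= 1 ->
     f (t *: x + (1 - t) *: y) <= t * f x + (1 - t) * f y) ->
  convex_function setT f.
Proof.
move=> f_cvx t x y _ _; rewrite /conv /=.
rewrite [X in _ <= X](_ : _ = t%:num * f x + (1 - t%:num) * f y) //.
by apply: f_cvx => //; exact: le1.
Qed.

Lemma sqnorm_convex : convex_function setT (@sqnorm R d).
Proof.
apply: convex_functionP => t x y t0 t1; rewrite /sqnorm !mulr_sumr -big_split.
apply: ler_sum => i _; rewrite !mxE /=.
have : 0 <= t * (1 - t) * (x ord0 i - y ord0 i) ^+ 2.
  by apply: mulr_ge0; [apply: mulr_ge0; lra | exact: sqr_ge0].
nra.
Qed.

End Euclid.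

Section Envelope.
Variables (R : realType) (d : nat).
Implicit Types (x y a b c : 'rV[R]_d) (G : {fset 'rV[R]_d}).

(* c is a nearest point of G to x (c itself need not lie in G). *)
Definition closest G x c : Prop := forall e, e \in G -> sqdist x c <= sqdist x e.

(* The upper envelope of the tangent planes at the points of G; the anchor
   b0 only serves as default value and is irrelevant once b0 \in G. *)
Definition envelope G b0 x : R :=
  \big[Order.max/tangent b0 x]_(b <- G) tangent b x.

Lemma bigmax_seq_attained (I : eqType) (s : seq I) (F : I -> R) (z : R) :
  \big[Order.max/z]_(i <- s) F i = z \/
  exists2 i, i \in s & \big[Order.max/z]_(i <- s) F i = F i.
Proof.
elim: s => [|e s IH]; first by left; rewrite big_nil.
rewrite big_cons; have [_|Fe] := leP (F e) (\big[Order.max/z]_(i <- s) F i).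
  case: IH => [->|[i si ->]]; first by left.
  by right; exists i => //; rewrite inE si orbT.
by right; exists e; rewrite ?inE ?eqxx.
Qed.

Variables (G : {fset 'rV[R]_d}) (b0 : 'rV[R]_d).
Hypothesis b0G : b0 \in G.

Lemma envelope_ge c x : c \in G -> tangent c x <= envelope G b0 x.
Proof. by move=> cG; rewrite /envelope; apply: le_bigmax_seq cG _. Qed.

Lemma envelope_attained x : exists2 c, c \in G & envelope G b0 x = tangent c x.
Proof.
rewrite /envelope.
by case: (bigmax_seq_attained G (fun b => tangent b x) (tangent b0 x)) => [->|];
  [exists b0|].
Qed.

Lemma envelope_le_sqnorm x : envelope G b0 x <= sqnorm x.
Proof. by have [c _ ->] := envelope_attained x; exact: tangent_le_sqnorm. Qed.

Lemma envelope_onG y : y \in G -> envelope G b0 y = sqnorm y.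
Proof.
move=> yG; apply/eqP; rewrite eq_le envelope_le_sqnorm /=.
by rewrite -{1}(tangent_self y) envelope_ge.
Qed.

Lemma envelope_bound x : `|envelope G b0 x| <= 3 * sqnorm x + 3 * sqnorm b0.
Proof.
have := envelope_le_sqnorm x; have := envelope_ge x b0G.
have := tangent_bound b0 x; have := sqnorm_ge0 x; have := sqnorm_ge0 b0.
rewrite !ler_norml => b0_ge0 x_ge0 /andP[tan_lo tan_hi] env_lo env_hi.
by apply/andP; split; lra.
Qed.

Lemma closestE c x : c \in G -> closest G x c <-> envelope G b0 x <= tangent c x.
Proof.
move=> cG; split=> [near_c|env_c e eG].
  have [e eG ->] := envelope_attained x.
  by move: (near_c e eG); rewrite !sqdist_tangent; lra.
by have := envelope_ge x eG; rewrite !sqdist_tangent; lra.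
Qed.

Lemma closest_sqdist c x : c \in G -> closest G x c ->
  sqdist x c = sqnorm x - envelope G b0 x.
Proof.
move=> cG /(closestE _ cG) env_c; have := envelope_ge x cG.
by rewrite sqdist_tangent; lra.
Qed.

Lemma dist2E x : dist2 G x = (sqnorm x - envelope G b0 x)%:E.
Proof.
have [c cG env_c] := envelope_attained x.
have near_c : closest G x c by apply/(closestE _ cG); rewrite env_c.
apply/eqP; rewrite eq_le; apply/andP; split.
  by apply: ereal_inf_lbound; exists c; rewrite ?closest_sqdist.
apply: le_ereal_inf_tmp => _ [e eG <-]; rewrite lee_fin.
by have := envelope_ge x eG; rewrite sqdist_tangent; lra.
Qed.

Lemma envelope_convex_ineq (t : R) x y : 0 <= t -> t <= 1 ->
  envelope G b0 (t *: x + (1 - t) *: y) <=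
  t * envelope G b0 x + (1 - t) * envelope G b0 y.
Proof.
move=> t0 t1; have [c cG ->] := envelope_attained (t *: x + (1 - t) *: y).
rewrite tangent_affine; have := envelope_ge x cG; have := envelope_ge y cG.
nra.
Qed.

Lemma envelope_convex : convex_function setT (envelope G b0).
Proof. exact/convex_functionP/envelope_convex_ineq. Qed.

End Envelope.

Section Borel.
Variables (R : realType) (d : nat).
Local Notation T := (Rd R d).

Lemma measurable_continuous (f : 'rV[R]_d -> R) :
  continuous f -> measurable_fun [set: T] f.
Proof.
move=> cf; apply: (measurability _ (measurable_realfun.RGenOpens.measurableE R)).
move=> _ [_ [a [b ->] <-]]; rewrite setTI; apply: sub_sigma_algebra.
by move/continuousP: cf; apply; exact: interval_open.
Qed.

Lemma measurable_coord i : measurable_fun [set: T] (fun x => x ord0 i).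
Proof. by apply: measurable_continuous; exact: coord_continuous. Qed.

Lemma measurable_sqnorm : measurable_fun [set: T] (@sqnorm R d).
Proof.
apply: measurable_sum => i; apply: measurable_funX; exact: measurable_coord.
Qed.

Lemma measurable_tangent b : measurable_fun [set: T] (tangent b).
Proof.
apply: measurable_funB; last exact: measurable_cst.
apply: measurable_funM; first exact: measurable_cst.
apply: measurable_sum => i; apply: measurable_funM; last exact: measurable_cst.
exact: measurable_coord.
Qed.

Lemma measurable_envelope (G : {fset 'rV[R]_d}) b0 :
  measurable_fun [set: T] (envelope G b0).
Proof.
rewrite /envelope; elim: (enum_fset G) => [|e s IH].
  by under eq_fun do rewrite big_nil; exact: measurable_tangent.
under eq_fun do rewrite big_cons.
exact: measurable_maxr (measurable_tangent e) IH.
Qed.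

Lemma measurable_set1 (a : 'rV[R]_d) : measurable ([set a] : set T).
Proof.
rewrite -[X in measurable X]setCK; apply: measurableC; apply: sub_sigma_algebra.
rewrite /= openC; apply: accessible_closed_set1; apply: hausdorff_accessible.
exact: norm_hausdorff.
Qed.

Lemma measurable_fun_le (f g : T -> R) : measurable_fun setT f ->
  measurable_fun setT g -> measurable [set x | f x <= g x].
Proof.
move=> mf mg; rewrite -[X in measurable X]setTI.
rewrite (_ : [set x | _] = (g \- f) @^-1` `[0, +oo[%classic).
  exact: (measurable_funB mg mf measurableT (measurable_itv _)).
by apply/seteqP; split => x /=; rewrite /preimage /= in_itv /= andbT subr_ge0.
Qed.

Lemma measurable_fun_lt (f g : T -> R) : measurable_fun setT f ->
  measurable_fun setT g -> measurable [set x | f x < g x].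
Proof.
move=> mf mg; rewrite -[X in measurable X]setTI.
rewrite (_ : [set x | _] = (g \- f) @^-1` `]0, +oo[%classic).
  exact: (measurable_funB mg mf measurableT (measurable_itv _)).
by apply/seteqP; split => x /=; rewrite /preimage /= in_itv /= andbT subr_gt0.
Qed.

End Borel.

Section RealIntegral.
Context dT (T : measurableType dT) (R : realType) (mu : probability T R).
Implicit Types (f g : T -> R) (A : set T).

Definition Rintegrable f : Prop := mu.-integrable setT (EFin \o f).

Lemma RintegralE f : Rintegrable f ->
  (\int[mu]_x (f x)%:E)%E = (\int[mu]_x f x)%:E.
Proof. by move=> intf; rewrite fineK //; exact: integrable_fin_num. Qed.

Lemma Rintegrable_ext f g : f =1 g -> Rintegrable f -> Rintegrable g.
Proof. by move=> /funext <-. Qed.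

Lemma RintegrableD f g : Rintegrable f -> Rintegrable g ->
  Rintegrable (fun x => f x + g x).
Proof. by move=> intf intg; apply: eq_integrable (integrableD _ intf intg). Qed.

Lemma RintegrableZ k f : Rintegrable f -> Rintegrable (fun x => k * f x).
Proof. by move=> intf; apply: eq_integrable (integrableZl _ k intf). Qed.

Lemma RintegrableB f g : Rintegrable f -> Rintegrable g ->
  Rintegrable (fun x => f x - g x).
Proof. by move=> intf intg; apply: eq_integrable (integrableB _ intf intg). Qed.

Lemma Rintegrable_cst c : Rintegrable (fun=> c).
Proof. exact: finite_measure_integrable_cst. Qed.

Lemma Rintegrable_indic A : measurable A -> Rintegrable (\1_A).
Proof. exact: integrable_indic. Qed.

Lemma Rintegrable_le f g : measurable_fun setT f ->
  (forall x, `|f x| <= g x) -> Rintegrable g -> Rintegrable f.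
Proof.
move=> mf fg; apply: le_integrable => //; first exact/measurable_EFinP.
by move=> x _ /=; rewrite lee_fin (le_trans (fg x)) ?ler_norm.
Qed.

Lemma Rintegrable_sum (I : Type) (s : seq I) (F : I -> T -> R) :
  (forall i, Rintegrable (F i)) -> Rintegrable (fun x => \sum_(i <- s) F i x).
Proof.
move=> intF; elim: s => [|i s IH].
  by apply: Rintegrable_ext (Rintegrable_cst 0) => x; rewrite big_nil.
by apply: Rintegrable_ext (RintegrableD (intF i) IH) => x; rewrite big_cons.
Qed.

Lemma Rintegral_cst1 c : \int[mu]_x c = c.
Proof. by rewrite Rintegral_cst // [X in fine X]probability_setT mulr1. Qed.

Lemma Rintegral_indic A : measurable A -> \int[mu]_x \1_A x = fine (mu A).
Proof. by move=> mA; rewrite /Rintegral integral_indic // setIT. Qed.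

Lemma Rintegral_sum (I : Type) (s : seq I) (F : I -> T -> R) :
  (forall i, Rintegrable (F i)) ->
  \int[mu]_x (\sum_(i <- s) F i x) = \sum_(i <- s) \int[mu]_x F i x.
Proof.
move=> intF; elim: s => [|i s IH].
  by under eq_Rintegral do rewrite big_nil; rewrite Rintegral_cst1 big_nil.
under eq_Rintegral do rewrite big_cons.
rewrite RintegralD ?IH ?big_cons //; first exact: intF.
exact: (Rintegrable_sum s intF).
Qed.

Lemma probability_fin A : measurable A -> mu A = (fine (mu A))%:E.
Proof. by move=> mA; rewrite fineK // fin_num_measure. Qed.

End RealIntegral.

Section SecondMoment.
Variables (R : realType) (d : nat).
Local Notation T := (Rd R d).
Variable mu : probability T R.
Hypothesis mu2 : finite_second_moment mu.

Lemma Rintegrable_sqnorm : Rintegrable mu (@sqnorm R d).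
Proof.
apply/integrableP; split; first by apply/measurable_EFinP; exact: measurable_sqnorm.
under eq_integral do rewrite /= ger0_norm ?sqnorm_ge0 //.
exact: mu2.
Qed.

Lemma Rintegrable_quadratic (f : T -> R) (c : R) : measurable_fun setT f ->
  (forall x, `|f x| <= c * (1 + sqnorm x)) -> Rintegrable mu f.
Proof.
move=> mf f_quad; apply: Rintegrable_le mf f_quad _.
exact/RintegrableZ/RintegrableD/Rintegrable_sqnorm/Rintegrable_cst.
Qed.

Lemma Rintegrable_envelope (G : {fset 'rV[R]_d}) b0 : b0 \in G ->
  Rintegrable mu (envelope G b0).
Proof.
move=> b0G; apply: (@Rintegrable_quadratic _ (3 + 3 * sqnorm b0)).
  exact: measurable_envelope.
move=> x; have := envelope_bound b0G x.
have := sqnorm_ge0 x; have := sqnorm_ge0 b0; nra.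
Qed.

Lemma Rintegrable_coord_indic (C : set T) i (c : R) : measurable C ->
  Rintegrable mu (fun x => \1_C x * (x ord0 i - c)).
Proof.
move=> mC; apply: (@Rintegrable_quadratic _ (1 + `|c|)).
  apply: measurable_funM; first exact: measurable_indic.
  by apply: measurable_funB; [exact: measurable_coord | exact: measurable_cst].
move=> x; rewrite normrM; have := coord_le_sqnorm x i; have := sqnorm_ge0 x.
have := normr_ge0 c; have := ler_normB (x ord0 i) c.
have : `|x ord0 i| <= 1 + x ord0 i ^+ 2.
  by rewrite -(real_normK (num_real (x ord0 i))); have := normr_ge0 (x ord0 i); nra.
have : `|\1_C x : R| <= 1.
  by rewrite indicE; case: (_ \in _); rewrite ?normr1 ?normr0.
have := normr_ge0 (\1_C x : R); have := normr_ge0 (x ord0 i - c).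
nra.
Qed.

Lemma distortionE (G : {fset 'rV[R]_d}) b0 : b0 \in G ->
  distortion mu G = (\int[mu]_x sqnorm x - \int[mu]_x envelope G b0 x)%:E.
Proof.
move=> b0G; rewrite -RintegralB //; last exact: Rintegrable_envelope.
  rewrite -RintegralE; last first.
    exact: RintegrableB Rintegrable_sqnorm (Rintegrable_envelope b0G).
  by apply: eq_integral => x _; rewrite (dist2E b0G).
exact: Rintegrable_sqnorm.
Qed.

End SecondMoment.

Section Stationarity.
Variables (R : realType) (d : nat).
Local Notation T := (Rd R d).
Implicit Types (x a b : 'rV[R]_d) (G : {fset 'rV[R]_d}).

Definition shift a (i : 'I_d) (m : R) : 'rV[R]_d :=
  \row_j (a ord0 j + (j == i)%:R * m).

Lemma sqdist_shift x a i m :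
  sqdist x (shift a i m) - sqdist x a = m ^+ 2 - 2 * m * (x ord0 i - a ord0 i).
Proof.
rewrite /sqdist -sumrB (bigD1 i) //= big1 => [|j ji].
  by rewrite !mxE eqxx mul1r; ring.
by rewrite !mxE (negbTE ji) mul0r addr0 subrr.
Qed.

Lemma dist2_le c G x : c \in G -> (dist2 G x <= (sqdist x c)%:E)%E.
Proof. by move=> cG; apply: ereal_inf_lbound; exists c. Qed.

Lemma dist2_replace G a a' (C : set T) x : a \in G ->
  (forall x, C x -> closest G x a) ->
  (forall x, ~ C x -> exists2 b, (b \in G) && (b != a) & closest G x b) ->
  (dist2 (a' |` (G `\ a))%fset x <=
   (sqnorm x - envelope G a x + \1_C x * (sqdist x a' - sqdist x a))%:E)%E.
Proof.
move=> aG HC HnC; have [Cx|nCx] := pselect (C x).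
  rewrite indicE mem_set // mul1r -(closest_sqdist aG aG (HC x Cx)).
  by rewrite addrC subrK; apply: dist2_le; rewrite !inE eqxx.
rewrite indicE memNset // mul0r addr0.
have [b /andP[bG ba] near_b] := HnC x nCx.
rewrite -(closest_sqdist aG bG near_b).
by apply: dist2_le; rewrite !inE ba bG orbT.
Qed.

Variable mu : probability T R.
Hypothesis mu2 : finite_second_moment mu.
Variables (N : nat) (G : {fset 'rV[R]_d}).
Hypothesis Gopt : opt_quantizer mu N G.

(* Stationarity (the centroid condition): on any measurable set C of points
   for which a is a nearest codeword, while points off C have another nearest
   codeword, the first moment of x - a vanishes; otherwise moving a towards
   the centroid of C would lower the distortion. *)
Lemma stationarity a (C : set T) i : a \in G -> measurable C ->
  (forall x, C x -> closest G x a) ->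
  (forall x, ~ C x -> exists2 b, (b \in G) && (b != a) & closest G x b) ->
  \int[mu]_x (\1_C x * (x ord0 i - a ord0 i)) = 0.
Proof.
move=> aG mC HC HnC; set m := \int[mu]_x _.
pose a' := shift a i m; pose G' := (a' |` (G `\ a))%fset.
have a'G' : a' \in G' by rewrite !inE eqxx.
have G'N : (#|` G'| <= N)%N.
  apply: leq_trans (proj1 Gopt); rewrite cardfsU1 [leqRHS](cardfsD1 a) aG.
  by case: (_ \notin _).
pose h x := m ^+ 2 * \1_C x - 2 * m * (\1_C x * (x ord0 i - a ord0 i)).
have int_h : Rintegrable mu h.
  by apply: RintegrableB; apply: RintegrableZ;
    [exact: Rintegrable_indic | exact: Rintegrable_coord_indic].
have h_int : \int[mu]_x h x = m ^+ 2 * fine (mu C) - 2 * m * m.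
  have int_C := Rintegrable_indic mu mC.
  have int_Cx := Rintegrable_coord_indic mu2 i (a ord0 i) mC.
  by rewrite RintegralB ?RintegralZl ?Rintegral_indic //;
    [exact: RintegrableZ int_C | exact: RintegrableZ int_Cx].
have env_G' : \int[mu]_x envelope G a x - \int[mu]_x h x <=
              \int[mu]_x envelope G' a' x.
  have int_env := Rintegrable_envelope mu2 aG.
  rewrite -RintegralB //; apply: le_Rintegral => //.
  - exact: RintegrableB int_env int_h.
  - exact: (Rintegrable_envelope mu2 a'G').
  move=> x _; have := dist2_replace a' x aG HC HnC; rewrite (dist2E a'G') lee_fin.
  by rewrite sqdist_shift /h; lra.
have opt := proj2 Gopt G' G'N.
rewrite (distortionE mu2 aG) (distortionE mu2 a'G') lee_fin in opt.
rewrite h_int in env_G'.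
have muC1 : fine (mu C) <= 1.
  by rewrite -lee_fin -probability_fin //; exact: probability_le1.
have : 0 <= m ^+ 2 * (fine (mu C) - 2) by lra.
by move=> ?; apply/eqP; rewrite -sqrf_eq0 eq_le sqr_ge0 andbT; nra.
Qed.

End Stationarity.

Section Cells.
Variables (R : realType) (d : nat).
Local Notation T := (Rd R d).
Variables (G : {fset 'rV[R]_d}) (p : T -> T).
Hypothesis mp : measurable_fun setT p.
Hypothesis np : nearest_proj G p.

Definition cell (a : 'rV[R]_d) : set T := [set x | p x = a].

Lemma measurable_cell a : measurable (cell a).
Proof. by rewrite -[cell a]setTI; exact: mp (measurable_set1 a). Qed.

Lemma proj_in x : p x \in G. Proof. exact: (np x).1. Qed.

Lemma proj_closest x : closest G x (p x). Proof. exact: (np x).2. Qed.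

Lemma sum_cells (g : 'rV[R]_d -> R) x :
  \sum_(a <- G) \1_(cell a) x * g a = g (p x).
Proof.
rewrite (bigD1_seq (p x)) ?fset_uniq ?proj_in //= big1 => [|a ap].
  by rewrite indicE mem_set // mul1r addr0.
by rewrite indicE memNset ?mul0r // => pxa; rewrite pxa eqxx in ap.
Qed.

Lemma measure_cells (m : {measure set T -> \bar R}) (A : set T) :
  measurable A -> m A = (\sum_(b <- G) m (A `&` cell b))%E.
Proof.
move=> mA; rewrite -measure_fbigsetU.
- congr (m _); rewrite -bigcup_fset; apply/seteqP; split => [x Ax|x [b _ []//]].
  by exists (p x); [exact: proj_in | split].
- by move=> b _; apply: measurableI mA (measurable_cell b).
- by move=> a b _ _ [x [[_ <-] [_ <-]]].
Qed.

End Cells.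

Section Centroid.
Variables (R : realType) (d : nat).
Local Notation T := (Rd R d).
Variable mu : probability T R.
Hypothesis mu2 : finite_second_moment mu.
Variables (N : nat) (G : {fset 'rV[R]_d}).
Hypothesis Gopt : opt_quantizer mu N G.
Variable p : T -> T.
Hypothesis mp : measurable_fun setT p.
Hypothesis np : nearest_proj G p.
Variable b0 : 'rV[R]_d.
Hypothesis b0G : b0 \in G.

Lemma envelope_proj x : envelope G b0 x = tangent (p x) x.
Proof.
apply/eqP; rewrite eq_le envelope_ge ?(proj_in np) // andbT.
by apply/(closestE b0G x (proj_in np x)); exact: proj_closest.
Qed.

Lemma cell_centroid a i : a \in G ->
  \int[mu]_x (\1_(cell p a) x * (x ord0 i - a ord0 i)) = 0.
Proof.
move=> aG; apply: (stationarity mu2 Gopt i aG (measurable_cell mp a)).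
  by move=> x <-; exact: proj_closest.
move=> x /eqP pxa; exists (p x); last exact: proj_closest.
by rewrite (proj_in np) pxa.
Qed.

Lemma Rintegrable_sqnorm_proj : Rintegrable mu (fun x => sqnorm (p x)).
Proof.
apply: (@Rintegrable_le _ _ _ _ _ (fun=> \sum_(b <- G) sqnorm b)).
- exact: measurableT_comp (@measurable_sqnorm R d) mp.
- move=> x; rewrite ger0_norm ?sqnorm_ge0 // -(sum_cells np (@sqnorm R d) x).
  apply: ler_sum => b _; rewrite indicE.
  by case: (_ \in _); rewrite ?mul1r ?mul0r ?sqnorm_ge0.
- exact: Rintegrable_cst.
Qed.

Lemma envelope_proj_expand x : envelope G b0 x = sqnorm (p x) + 2 *
  \sum_(i < d) \sum_(a <- G) a ord0 i * (\1_(cell p a) x * (x ord0 i - a ord0 i)).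
Proof.
under eq_bigr do under eq_bigr do rewrite mulrCA.
under eq_bigr do rewrite (sum_cells np (fun a => _ * (x ord0 _ - a ord0 _))) /=.
rewrite envelope_proj /tangent /dot /sqnorm !mulr_sumr -sumrB -big_split /=.
by apply: eq_bigr => i _; ring.
Qed.

(* Integrating the expansion, the corrections vanish by the centroid
   condition: the envelope has the same mean as |p|^2. *)
Lemma integral_envelope :
  \int[mu]_x envelope G b0 x = \int[mu]_x sqnorm (p x).
Proof.
pose F (i : 'I_d) (a : 'rV[R]_d) (x : T) :=
  a ord0 i * (\1_(cell p a) x * (x ord0 i - a ord0 i)).
have int_F i a : Rintegrable mu (F i a).
  exact: RintegrableZ (Rintegrable_coord_indic mu2 i _ (measurable_cell mp a)).
have int_sumF i : Rintegrable mu (fun x => \sum_(a <- G) F i a x).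
  exact: Rintegrable_sum.
have int_sum2F : Rintegrable mu (fun x => \sum_(i < d) \sum_(a <- G) F i a x).
  exact: Rintegrable_sum.
under eq_Rintegral do rewrite envelope_proj_expand -/(F _ _ _).
rewrite RintegralD //; last 2 first.
- exact: Rintegrable_sqnorm_proj.
- exact: RintegrableZ int_sum2F.
rewrite RintegralZl // (Rintegral_sum _ int_sumF) big1 ?mulr0 ?addr0 // => i _.
rewrite (Rintegral_sum _ (int_F i)) big1_seq // => a /= aG.
rewrite RintegralZl ?cell_centroid ?mulr0 //.
exact: (Rintegrable_coord_indic mu2 i _ (measurable_cell mp a)).
Qed.

(* Against the quantized law the envelope integrates |p|^2, since it equals
   |.|^2 on the codebook. *)
Lemma integral_envelope_pushforward :
  (\int[pushforward mu p]_y (envelope G b0 y)%:E)%E =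
  (\int[mu]_x sqnorm (p x))%:E.
Proof.
rewrite integral_pushforward //; last first.
- apply: Rintegrable_ext Rintegrable_sqnorm_proj => x /=.
  by rewrite envelope_onG // (proj_in np).
- by apply/measurable_EFinP; exact: measurable_envelope.
rewrite preimage_setT -RintegralE; last exact: Rintegrable_sqnorm_proj.
by apply: eq_integral => x _ /=; rewrite envelope_onG // (proj_in np).
Qed.

End Centroid.

Section Voronoi.
Variables (R : realType) (d : nat).
Local Notation T := (Rd R d).
Variable mu : probability T R.
Hypothesis mu2 : finite_second_moment mu.
Variables (N : nat) (G : {fset 'rV[R]_d}).
Hypothesis Gopt : opt_quantizer mu N G.
Variable p : T -> T.
Hypothesis mp : measurable_fun setT p.
Hypothesis np : nearest_proj G p.

Definition voronoi (a : 'rV[R]_d) : set T := [set x | closest G x a].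

Lemma voronoiE b0 a : b0 \in G -> a \in G ->
  voronoi a = [set x | envelope G b0 x <= tangent a x].
Proof. by move=> b0G aG; apply/seteqP; split => x /(closestE b0G x aG). Qed.

Lemma measurable_voronoi a : a \in G -> measurable (voronoi a).
Proof.
move=> aG; rewrite (voronoiE aG aG).
apply: measurable_fun_le; first exact: measurable_envelope.
exact: measurable_tangent.
Qed.

Lemma cell_sub_voronoi a : cell p a `<=` voronoi a.
Proof. by move=> x <-; exact: proj_closest. Qed.

(* The part of the cell of b where a is also nearest has vanishing first
   moment about b: it is the difference of two sets satisfying the
   hypotheses of the stationarity lemma. *)
Lemma boundary_moment a b i : a \in G -> b \in G -> a != b ->
  \int[mu]_x (\1_(voronoi a `&` cell p b) x * (x ord0 i - b ord0 i)) = 0.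
Proof.
move=> aG bG ab; set D := voronoi a `&` cell p b; set E := cell p b `\` voronoi a.
have mcell := measurable_cell mp b; have mE : measurable E.
  exact: measurableD mcell (measurable_voronoi aG).
have other x : ~ cell p b x -> exists2 c, (c \in G) && (c != b) & closest G x c.
  by move=> /eqP pxb; exists (p x); rewrite ?(proj_in np) //; exact: proj_closest.
have on_cell x : cell p b x -> closest G x b by move=> <-; exact: proj_closest.
have st_cell := stationarity mu2 Gopt i bG mcell on_cell other.
have st_E := stationarity mu2 Gopt i bG mE (fun x Ex => on_cell x Ex.1).
rewrite (@eq_Rintegral _ _ _ mu _
    (fun x => \1_(cell p b) x * (x ord0 i - b ord0 i)
              - \1_E x * (x ord0 i - b ord0 i))) => [|x _].
  rewrite RintegralB ?st_cell ?st_E ?subrr //.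
  - move=> x nEx; have [cx|] := pselect (cell p b x); last exact: other.
    by exists a; [rewrite aG | apply: contra_notP nEx].
  - exact: (Rintegrable_coord_indic mu2 i _ mcell).
  - exact: (Rintegrable_coord_indic mu2 i _ mE).
rewrite /D /E setDE !indicI indicC /= !indicE.
by case: (x \in voronoi a); case: (x \in cell p b) => /=; ring.
Qed.

Lemma boundary_null a b : a \in G -> b \in G -> a != b ->
  mu (voronoi a `&` cell p b) = 0%E.
Proof.
move=> aG bG ab; set D := voronoi a `&` cell p b.
have mD : measurable D.
  exact: measurableI (measurable_voronoi aG) (measurable_cell mp b).
have int_term (i : 'I_d) := Rintegrable_coord_indic mu2 i (b ord0 i) mD.
have on_D x :
    \sum_(i < d) (a ord0 i - b ord0 i) * (\1_D x * (x ord0 i - b ord0 i))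
    = sqdist a b / 2 * \1_D x.
  rewrite indicE; have [[Vx Cx]|nDx] := pselect (D x); last first.
    by rewrite memNset // mulr0 big1 // => i _; rewrite mul0r mulr0.
  rewrite mem_set //= mulr1; under eq_bigr do rewrite mul1r.
  have xa : sqdist x a <= sqdist x b by apply: Vx.
  have xb : sqdist x b <= sqdist x a by rewrite -Cx; exact: proj_closest.
  by apply: (@mulfI _ 2); rewrite ?pnatr_eq0 // dot_diff_sqdist; lra.
have moment0 : \int[mu]_x \sum_(i < d)
    (a ord0 i - b ord0 i) * (\1_D x * (x ord0 i - b ord0 i)) = 0.
  rewrite Rintegral_sum => [|i]; last exact: RintegrableZ (int_term i).
  rewrite big1 // => i _.
  rewrite RintegralZl ?(boundary_moment i aG bG ab) ?mulr0 //.
  exact: int_term.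
have : sqdist a b / 2 * fine (mu D) = 0.
  rewrite -Rintegral_indic // -RintegralZl //; last exact: Rintegrable_indic.
  by rewrite -moment0; apply: eq_Rintegral => x _; rewrite on_D.
move/eqP; rewrite !mulf_eq0 invr_eq0 pnatr_eq0 orbF.
have /negPf -> : sqdist a b != 0 by apply: contra ab => /eqP/sqdist_eq0 ->.
by rewrite (probability_fin mu mD) => /= /eqP ->.
Qed.

Lemma measure_voronoi a : a \in G -> mu (voronoi a) = mu (cell p a).
Proof.
move=> aG; rewrite (measure_cells mp np mu (measurable_voronoi aG)).
rewrite (bigD1_seq a) ?fset_uniq //= big1_seq => [|b /andP[ba bG]].
  by rewrite adde0 (setIidr (@cell_sub_voronoi a)).
by apply: boundary_null; rewrite // eq_sym.
Qed.

End Voronoi.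

Section ConvexOrderFacts.
Variables (R : realType) (d : nat).
Local Notation T := (Rd R d).
Implicit Types mu nu : probability T R.

Lemma second_moment_cvx_le nu mu : cvx_le nu mu ->
  finite_second_moment mu -> finite_second_moment nu.
Proof.
by move=> numu mu2; exact: le_lt_trans (numu _ (@sqnorm_convex R d)) mu2.
Qed.

Lemma Rintegral_cvx_le nu mu (f : 'rV[R]_d -> R) : cvx_le nu mu ->
  convex_function setT f -> Rintegrable nu f -> Rintegrable mu f ->
  \int[nu]_x f x <= \int[mu]_x f x.
Proof.
by move=> numu cf intnu intmu; rewrite -lee_fin -!RintegralE //; exact: numu.
Qed.

Lemma distortion_fset0 mu : distortion mu fset0 = +oo%E.
Proof.
rewrite /distortion (_ : dist2 fset0 = cst +oo%E).
  by rewrite integral_cst // [X in (_ * X)%E]probability_setT mule1.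
apply: funext => x; apply/eqP; rewrite eq_le leey /=.
by apply: le_ereal_inf_tmp => y [c] /=; rewrite inE.
Qed.

Lemma envelope_kink_convex (G : {fset 'rV[R]_d}) b0 a (e : R) : b0 \in G ->
  convex_function setT (fun x => Order.max (envelope G b0 x) (tangent a x + e)).
Proof.
move=> b0G; set psi := fun x => Order.max _ _.
have env_psi x : envelope G b0 x <= psi x by rewrite le_max lexx.
have tan_psi x : tangent a x + e <= psi x by rewrite le_max lexx orbT.
apply: convex_functionP => t x y t0 t1; rewrite ge_max; apply/andP; split.
  apply: le_trans (envelope_convex_ineq b0G x y t0 t1) _.
  by have := env_psi x; have := env_psi y; nra.
by rewrite tangent_affine; have := tan_psi x; have := tan_psi y; nra.
Qed.

End ConvexOrderFacts.

Section ConvexOrder.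
Variables (R : realType) (d : nat).
Local Notation T := (Rd R d).
Variable mu : probability T R.
Hypothesis mu2 : finite_second_moment mu.
Variables (N : nat) (G : {fset 'rV[R]_d}).
Hypothesis Gopt : opt_quantizer mu N G.
Variable p : T -> T.
Hypothesis mp : measurable_fun setT p.
Hypothesis np : nearest_proj G p.
Variable nu : probability T R.
Hypothesis quantized_le_nu : cvx_le (pushforward mu p) nu.
Hypothesis nu_le_mu : cvx_le nu mu.
Variable b0 : 'rV[R]_d.
Hypothesis b0G : b0 \in G.

Let nu2 : finite_second_moment nu := second_moment_cvx_le nu_le_mu mu2.

(* The envelope is squeezed between the quantized law and mu, whose
   integrals coincide; so nu integrates it like mu. *)
Lemma integral_envelope_cvx :
  \int[nu]_x envelope G b0 x = \int[mu]_x envelope G b0 x.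
Proof.
have [int_nu int_mu] := (Rintegrable_envelope nu2 b0G, Rintegrable_envelope mu2 b0G).
apply/eqP; rewrite eq_le Rintegral_cvx_le //=; last exact: envelope_convex.
rewrite (integral_envelope mu2 Gopt mp np b0G) -lee_fin.
rewrite -(integral_envelope_pushforward mu mp np b0G) -RintegralE //.
exact: quantized_le_nu (envelope_convex b0G).
Qed.

Lemma opt_quantizer_cvx_le : opt_quantizer nu N G.
Proof.
split=> [|G' G'N]; first exact: proj1 Gopt.
have [->|[b' b'G']] := fset_0Vmem G'; first by rewrite distortion_fset0 leey.
have := proj2 Gopt G' G'N.
rewrite !(distortionE nu2 b0G, distortionE nu2 b'G', distortionE mu2 b0G,
  distortionE mu2 b'G') !lee_fin integral_envelope_cvx.
have := Rintegral_cvx_le nu_le_mu (envelope_convex b'G')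
  (Rintegrable_envelope nu2 b'G') (Rintegrable_envelope mu2 b'G').
lra.
Qed.

Definition shell (a : 'rV[R]_d) (e : R) : set T :=
  [set x | envelope G b0 x < tangent a x + e].

Lemma measurable_shell a e : measurable (shell a e).
Proof.
apply: measurable_fun_lt; first exact: measurable_envelope.
by apply: measurable_funD; [exact: measurable_tangent | exact: measurable_cst].
Qed.

(* Testing the convex order against max(envelope, tangent a + e), which
   exceeds the envelope by e on the Voronoi region of a and by at most e on
   the shell, bounds the nu-mass of the region by the mu-mass of the shell. *)
Lemma voronoi_shell_le a e : a \in G -> 0 < e ->
  fine (nu (voronoi G a)) <= fine (mu (shell a e)).
Proof.
move=> aG e0; set psi := fun x => Order.max (envelope G b0 x) (tangent a x + e).
have mV := measurable_voronoi aG; have mS := measurable_shell a e.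
have int_psi (m : probability T R) : finite_second_moment m -> Rintegrable m psi.
  move=> m2; apply: (Rintegrable_quadratic m2
    (c := 5 + 3 * sqnorm b0 + 3 * sqnorm a + `|e|)).
    apply: measurable_maxr; first exact: measurable_envelope.
    by apply: measurable_funD; [exact: measurable_tangent | exact: measurable_cst].
  move=> x; have := envelope_bound b0G x; have := tangent_bound a x.
  have := ler_normD (tangent a x) e; have := sqnorm_ge0 x.
  have := sqnorm_ge0 b0; have := sqnorm_ge0 a; have := normr_ge0 e.
  rewrite /psi; case: (leP (envelope G b0 x) (tangent a x + e)) => _; nra.
have int_envZ (m : probability T R) (A : set T) : finite_second_moment m ->
    measurable A -> Rintegrable m (fun x => envelope G b0 x + e * \1_A x).
  move=> m2 mA.
  exact: RintegrableD (Rintegrable_envelope m2 b0G)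
    (RintegrableZ e (Rintegrable_indic m mA)).
have lower : \int[nu]_x envelope G b0 x + e * fine (nu (voronoi G a)) <=
             \int[nu]_x psi x.
  rewrite -Rintegral_indic // -RintegralZl ?(Rintegrable_indic nu mV) //.
  rewrite -RintegralD //; last 2 first.
  - exact: (Rintegrable_envelope nu2 b0G).
  - exact: RintegrableZ (Rintegrable_indic nu mV).
  apply: le_Rintegral => //; [exact: int_envZ | exact: int_psi |] => x _.
  rewrite /psi indicE; have [Vx|nVx] := pselect (voronoi G a x).
    rewrite mem_set // mulr1 le_max lerD2r.
    by move/(closestE b0G x aG): Vx => ->; rewrite orbT.
  by rewrite memNset // mulr0 addr0 le_max lexx.
have upper : \int[mu]_x psi x <=
             \int[mu]_x envelope G b0 x + e * fine (mu (shell a e)).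
  rewrite -Rintegral_indic // -RintegralZl ?(Rintegrable_indic mu mS) //.
  rewrite -RintegralD //; last 2 first.
  - exact: (Rintegrable_envelope mu2 b0G).
  - exact: RintegrableZ (Rintegrable_indic mu mS).
  apply: le_Rintegral => //; [exact: int_psi | exact: int_envZ |] => x _.
  rewrite /psi indicE ge_max; have [Sx|nSx] := pselect (shell a e x).
    rewrite mem_set // mulr1 lerDl (ltW e0) lerD2r /=.
    exact: envelope_ge.
  by rewrite memNset // mulr0 addr0 lexx /= leNgt; apply/negP.
have := Rintegral_cvx_le nu_le_mu (envelope_kink_convex a e b0G)
  (int_psi _ nu2) (int_psi _ mu2).
rewrite -/psi integral_envelope_cvx in lower => psi_le.
have : e * fine (nu (voronoi G a)) <= e * fine (mu (shell a e)) by lra.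
by rewrite ler_pM2l.
Qed.

Lemma bigcap_shell a : a \in G ->
  \bigcap_n shell a n.+1%:R^-1 = voronoi G a.
Proof.
move=> aG; rewrite (voronoiE b0G aG); apply/seteqP; split => x /=; last first.
  by move=> Vx n _; apply: le_lt_trans Vx _; rewrite ltrDl invr_gt0 ltr0Sn.
move=> in_shells; rewrite leNgt; apply/negP => gap.
set del := envelope G b0 x - tangent a x.
have del0 : 0 < del by rewrite subr_gt0.
have small : (Num.trunc del^-1).+1%:R^-1 < del.
  by rewrite invf_plt ?posrE ?ltr0Sn // truncnS_gt.
have := in_shells (Num.trunc del^-1) I; rewrite /shell /=.
by move: small; move: (_.+1%:R^-1) => r; rewrite /del; lra.
Qed.

(* By continuity from above, nu charges the Voronoi region of a codeword at
   most as much as mu does. *)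
Lemma voronoi_le a : a \in G -> (nu (voronoi G a) <= mu (voronoi G a))%E.
Proof.
move=> aG; pose S n := shell a n.+1%:R^-1.
have S_decr : nonincreasing_seq S.
  move=> m n mn; apply/subsetPset => x; rewrite /S /shell /= => h.
  apply: lt_le_trans h _; rewrite lerD2l lef_pV2 ?posrE ?ltr0Sn // ler_nat.
  by rewrite ltnS.
have S_cvg : (mu \o S) @ \oo --> mu (voronoi G a).
  rewrite -(bigcap_shell aG); apply: nonincreasing_cvg_mu => //.
  - apply: le_lt_trans (probability_le1 mu (measurable_shell a 0.+1%:R^-1)) _.
    by rewrite ltry.
  - by move=> n; exact: measurable_shell.
  - by rewrite /S bigcap_shell //; exact: measurable_voronoi.
suff : (nu (voronoi G a) <= limn (mu \o S))%E.
  by rewrite (cvg_lim (@ereal_hausdorff R) S_cvg).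
apply: lime_ge; first by apply/cvg_ex; exists (mu (voronoi G a)).
apply: nearW => n /=.
rewrite (probability_fin nu (measurable_voronoi aG)).
rewrite (probability_fin mu (measurable_shell a n.+1%:R^-1)) lee_fin.
by apply: voronoi_shell_le => //; rewrite invr_gt0 ltr0Sn.
Qed.

(* Since nu(cell) <= nu(voronoi) <= mu(voronoi) = mu(cell) for every codeword
   and both families of masses sum to one, they agree. *)
Lemma measure_cell_cvx a : a \in G -> nu (cell p a) = mu (cell p a).
Proof.
have fine_le b : b \in G -> fine (nu (cell p b)) <= fine (mu (cell p b)).
  move=> bG; rewrite -lee_fin -!probability_fin; try exact: measurable_cell.
  rewrite -(measure_voronoi mu2 Gopt mp np bG).
  apply: le_trans (voronoi_le bG); apply: le_measure; rewrite ?inE.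
  - exact: measurable_cell.
  - exact: measurable_voronoi.
  - exact: cell_sub_voronoi.
have sum1 (m : probability T R) : \sum_(b <- G) fine (m (cell p b)) = 1.
  apply: EFin_inj; rewrite -sumEFin (eq_bigr (fun b => m (setT `&` cell p b))).
    by rewrite -measure_cells //; exact: probability_setT.
  by move=> b _; rewrite setTI -probability_fin //; exact: measurable_cell.
have : \sum_(b <- G | b \in G) (fine (mu (cell p b)) - fine (nu (cell p b))) == 0.
  by rewrite -big_seq sumrB !sum1 subrr.
rewrite psumr_eq0 => [/allP all0 aG|b bG]; last by rewrite subr_ge0 fine_le.
move: (all0 a aG); rewrite aG subr_eq0 => /eqP eq_a.
by rewrite (probability_fin nu (measurable_cell mp a)) -eq_a -probability_fin //;
  exact: measurable_cell.
Qed.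

Lemma pushforward_cvx (A : set T) : measurable A ->
  pushforward nu p A = pushforward mu p A.
Proof.
move=> mA; have mpA : measurable (p @^-1` A).
  by rewrite -[_ @^-1` _]setTI; exact: mp.
rewrite /pushforward (measure_cells mp np nu mpA) (measure_cells mp np mu mpA).
apply: eq_big_seq => b bG; have [Ab|nAb] := pselect (A b).
  rewrite (_ : p @^-1` A `&` cell p b = cell p b); first exact: measure_cell_cvx.
  by apply/seteqP; split => [x []//|x /= pxb]; split; rewrite //= pxb.
rewrite (_ : p @^-1` A `&` cell p b = set0) ?measure0 //.
by apply/seteqP; split => // x [/= Apx pxb]; apply: nAb; rewrite -pxb.
Qed.

End ConvexOrder.

Theorem corollary1 (R : realType) (d N : nat)
  (mu : probability (Rd R d) R) (G : {fset 'rV[R]_d})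
  (p : Rd R d -> Rd R d) (nu : probability (Rd R d) R) :
  finite_second_moment mu ->
  (1 <= N)%N ->
  opt_quantizer mu N G ->
  measurable_fun setT p ->
  nearest_proj G p ->
  cvx_le (pushforward mu p) nu ->
  cvx_le nu mu ->
  opt_quantizer nu N G /\
  (forall A : set (Rd R d), measurable A ->
     pushforward nu p A = pushforward mu p A).
Proof.
move=> mu2 _ Gopt mp np quantized_le_nu nu_le_mu.
(* the codebook is nonempty: it contains the projection of the origin *)
have anchorG : p 0 \in G := proj_in np 0.
split.
  exact: (opt_quantizer_cvx_le mu2 Gopt mp np quantized_le_nu nu_le_mu anchorG).
exact: (pushforward_cvx mu2 Gopt mp np quantized_le_nu nu_le_mu anchorG).
Qed.
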